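(* Let $P$ be a finite $(3+1)$-free poset and let $\mathsf a=a_{n+1}a_n\cdots a_1$ and $\mathsf b=b_nb_{n-1}\cdots b_1$ be $P$-strictly decreasing words such that (i) $a_i\sim_Pb_i$ for all $i\in[n]$; (ii) $a_{i+1}\sim_Pb_i$ for all $i\in[n]$; (iii) $a_i<_Pb_{i+1}$ for all $i\in[n-1]$; (iv) $b_i<_Pa_{i+2}$ for all $i\in[n-1]$. Then $\mathbf{u}_{\mathsf a}\mathbf{u}_{\mathsf b}\equiv\mathbf{u}_{\mathsf b}\mathbf{u}_{\mathsf a}\pmod{I^P_{\mathrm{plac}}}$.
   Context: $a<_Pb$: strict order; $a\sim_Pb$: incomparable or equal. A word $w_1\cdots w_m$ is $P$-strictly decreasing if $w_1>_P\cdots>_Pw_m$. $\mathcal{U}_P=\mathbb{Z}\langle u_a:a\in P\rangle$, $\mathbf{u}_w=u_{w_1}\cdots u_{w_m}$. $I^P_{\mathrm{plac}}$ is the two-sided ideal generated by: $u_bu_au_c-u_bu_cu_a$ when $a<_Pb$, $c\not<_Pb$, $a<_Pc$; $u_cu_au_b-u_au_cu_b$ when $b\not<_Pa$, $b<_Pc$, $a<_Pc$; $u_cu_au_b-u_bu_cu_a$ when $a\sim_Pb$, $b\sim_Pc$, $a<_Pc$. *)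

From HB Require Import structures.
From mathcomp Require Import all_boot all_order all_algebra.
Set Implicit Arguments. Unset Strict Implicit. Unset Printing Implicit Defensive.
Import Order.TTheory GRing.Theory Num.Theory.
Local Open Scope order_scope.

Section Plactic.
Context {disp : Order.disp_t} {P : finPOrderType disp}.

Definition simP (x y : P) : bool := ~~ (x < y) && ~~ (y < x).

Definition three_one_free : Prop :=
  ~ exists x y z w : P, [/\ x < y, y < z, simP w x, simP w y & simP w z].

(* Words are sequences of letters; the monomial u_w is identified with w.
   Elements of Z<u_a : a in P> are represented by their coefficient
   functions  seq P -> int. *)

(* the three families of generators u_l - u_r of I^P_plac *)
Definition plac_gen (l r : seq P) : Prop :=
  exists a b c : P,
    [/\ a < b, ~~ (c < b), a < c, l = [:: b; a; c] & r = [:: b; c; a]]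
 \/ [/\ ~~ (b < a), b < c, a < c, l = [:: c; a; b] & r = [:: a; c; b]]
 \/ [/\ simP a b, simP b c, a < c, l = [:: c; a; b] & r = [:: b; c; a]].

Definition mono (v : seq P) : seq P -> int := fun w => Posz (nat_of_bool (w == v)).

(* f lies in the two-sided ideal generated by the plac_gen differences:
   f is a finite Z-linear combination of terms u_x (u_l - u_r) u_y. *)
Definition in_Iplac (f : seq P -> int) : Prop :=
  exists s : seq (int * seq P * seq P * seq P * seq P),
    (forall t, t \in s -> plac_gen t.1.1.2 t.1.2) /\
    forall w, f w = (\sum_(t <- s)
        t.1.1.1.1 * (mono (t.1.1.1.2 ++ t.1.1.2 ++ t.2) w
                     - mono (t.1.1.1.2 ++ t.1.2 ++ t.2) w))%R.

Definition plac_equiv (f g : seq P -> int) : Prop :=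
  in_Iplac (fun w => (f w - g w)%R).

Definition word_dec (w : nat -> P) (m : nat) : seq P :=
  [seq w i | i <- rev (iota 1 m)].

End Plactic.

From mathcomp Require Import all_boot all_order all_algebra.
From mathcomp Require Import zify.
Import Order.TTheory GRing.Theory Num.Theory.
Local Open Scope order_scope.

(* Each letter b_k commutes with the word a = a_(n+1) ... a_1 on its own.  In
   a_(n+1) ... a_1 b_k the letter b_k first moves left past a_1, ..., a_(k-1) by
   the first relation (a_(j+1) a_j b_k ~ a_(j+1) b_k a_j, since a_j < b_k and b_k
   is not below a_(j+1)); then a_(k+1) a_k b_k ~ b_k a_(k+1) a_k by the third
   relation (a_k ~ b_k ~ a_(k+1)); finally a_(m+1) b_k a_m ~ b_k a_(m+1) a_m for
   m > k by the second relation (a_m is not below b_k, and b_k < a_(m+1)). *)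

Section PlacticCongruence.
Context {disp : Order.disp_t} {P : finPOrderType disp}.
Implicit Types (u v w x y : seq P).

Definition plac_eq u v := plac_equiv (mono u) (mono v).

Lemma plac_eq_refl u : plac_eq u u.
Proof. by exists [::]; split => // w; rewrite big_nil subrr. Qed.

Lemma plac_eq_trans {u v w} : plac_eq u v -> plac_eq v w -> plac_eq u w.
Proof.
case=> s1 [gen1 def1] [s2 [gen2 def2]]; exists (s1 ++ s2); split.
  by move=> t; rewrite mem_cat => /orP [/gen1|/gen2].
by move=> z; rewrite big_cat /= -def1 -def2 addrA subrK.
Qed.

Lemma plac_eq_context (g f hx hy : seq P -> seq P) (C : pred (seq P)) :
  (forall u w, mono (g u) w = if C w then mono u (f w) else 0%R) ->
  (forall tx l ty, g (tx ++ l ++ ty) = hx tx ++ l ++ hy ty) ->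
  forall u v, plac_eq u v -> plac_eq (g u) (g v).
Proof.
move=> mono_g g_cat u v [s [gen_s def_s]].
exists [seq (t.1.1.1.1, hx t.1.1.1.2, t.1.1.2, t.1.2, hy t.2) | t <- s]; split.
  by move=> t /mapP [t' /gen_s ? ->].
move=> w; rewrite big_map /=.
under eq_bigr => t _ do rewrite -!g_cat !mono_g.
rewrite !mono_g; case: (C w); first by rewrite def_s.
by rewrite big1 // => t _; rewrite subrr mulr0.
Qed.

Lemma mono_cat x u w :
  mono (x ++ u) w = if take (size x) w == x then mono u (drop (size x) w) else 0%R.
Proof.
rewrite /mono; case: eqP => [->|ne_w].
  by rewrite take_size_cat // eqxx drop_size_cat // eqxx.
case: eqP => // def_take; case: eqP => // def_drop; case: ne_w.
by rewrite -(cat_take_drop (size x) w) def_take def_drop.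
Qed.

Lemma mono_rev v w : mono v w = mono (rev v) (rev w).
Proof. by rewrite /mono (inj_eq (can_inj (@revK _))). Qed.

Lemma plac_eq_catl x {u v} : plac_eq u v -> plac_eq (x ++ u) (x ++ v).
Proof.
apply: (@plac_eq_context (cat x) (drop (size x)) (cat x) id
  (fun w => take (size x) w == x)) => [u' w|tx l ty]; first exact: mono_cat.
by rewrite catA.
Qed.

Lemma plac_eq_catr y {u v} : plac_eq u v -> plac_eq (u ++ y) (v ++ y).
Proof.
apply: (@plac_eq_context (fun u => u ++ y)
  (fun w => rev (drop (size y) (rev w))) id (fun u => u ++ y)
  (fun w => take (size y) (rev w) == rev y)) => [u' w|tx l ty].
  rewrite mono_rev rev_cat -size_rev mono_cat size_rev; case: ifP => // _.
  by rewrite mono_rev revK.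
by rewrite -!catA.
Qed.

Lemma plac_eq_gen l r w : plac_gen l r -> plac_eq (l ++ w) (r ++ w).
Proof.
move=> gen_lr; apply: plac_eq_catr.
exists [:: (1%R, [::], l, r, [::])]; split; first by move=> t /[1!inE] /eqP ->.
by move=> z; rewrite big_seq1 /= mul1r !cats0.
Qed.

Lemma plac_eq_swap23 (p q r : P) w :
  q < p -> ~~ (r < p) -> q < r -> plac_eq [:: p, q, r & w] [:: p, r, q & w].
Proof.
by move=> *; apply: (@plac_eq_gen [:: p; q; r] [:: p; r; q]); exists q, p, r; left.
Qed.

Lemma plac_eq_swap12 (p q r : P) w :
  ~~ (r < q) -> r < p -> q < p -> plac_eq [:: p, q, r & w] [:: q, p, r & w].
Proof.
by move=> *; apply: (@plac_eq_gen [:: p; q; r] [:: q; p; r]); exists q, r, p; right; left.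
Qed.

Lemma plac_eq_rotate (p q r : P) w :
  simP q r -> simP r p -> q < p -> plac_eq [:: p, q, r & w] [:: r, p, q & w].
Proof.
by move=> *; apply: (@plac_eq_gen [:: p; q; r] [:: r; p; q]); exists q, r, p; right; right.
Qed.

Lemma simPC (x y : P) : simP x y = simP y x.
Proof. by rewrite /simP andbC. Qed.

Lemma plac_eq_commute u v :
  (forall c : P, c \in v -> plac_eq (u ++ [:: c]) (c :: u)) ->
  plac_eq (u ++ v) (v ++ u).
Proof.
elim: v => [|c v IHv] comm_v; first by rewrite cats0; apply: plac_eq_refl.
have -> : u ++ c :: v = (u ++ [:: c]) ++ v by rewrite -catA.
apply: plac_eq_trans (plac_eq_catr v (comm_v c (mem_head _ _))) _.
apply: (plac_eq_catl [:: c]); apply: IHv => d vd.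
by apply: comm_v; rewrite inE vd orbT.
Qed.

End PlacticCongruence.

Section LetterThroughDecreasingWord.
Context {disp : Order.disp_t} {P : finPOrderType disp}.
Variables (a : nat -> P) (b : P).

Lemma word_decS m : word_dec a m.+1 = a m.+1 :: word_dec a m.
Proof. by rewrite /word_dec -[m.+1]addn1 iotaD rev_cat /= addnC. Qed.

Lemma plac_eq_letter_low m :
  (forall j, (1 <= j <= m)%N -> [/\ a j < a j.+1, ~~ (b < a j.+1) & a j < b]) ->
  plac_eq (word_dec a m.+1 ++ [:: b]) [:: a m.+1, b & word_dec a m].
Proof.
elim: m => [|m IHm] low_m; first exact: plac_eq_refl.
have [a_lt b_nlt a_ltb] := low_m m.+1 (leqnn _).
rewrite word_decS; apply: plac_eq_trans (plac_eq_catl [:: a m.+2] (IHm _)) _.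
  by move=> j /andP [j_ge1 j_le]; apply: low_m; rewrite j_ge1 leqW.
by rewrite word_decS; apply: plac_eq_swap23.
Qed.

Lemma plac_eq_letter_high k N :
  (0 < k <= N)%N -> plac_eq (word_dec a k ++ [:: b]) (b :: word_dec a k) ->
  (forall m, (k <= m < N)%N -> [/\ ~~ (a m < b), a m < a m.+1 & b < a m.+1]) ->
  plac_eq (word_dec a N ++ [:: b]) (b :: word_dec a N).
Proof.
move=> /andP [k_gt0 le_kN] comm_k.
elim: N le_kN => [|N IHN]; first by rewrite leqNgt k_gt0.
rewrite leq_eqVlt ltnS => /orP [/eqP <- //|le_kN] high_N.
have := high_N N; rewrite le_kN ltnSn => /(_ isT) [a_nlt a_lt b_lt].
rewrite word_decS; apply: plac_eq_trans (plac_eq_catl [:: a N.+1] (IHN le_kN _)) _.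
  by move=> m /andP [le_km lt_mN]; apply: high_N; rewrite le_km ltnS ltnW.
case: N {IHN high_N} le_kN a_nlt a_lt b_lt => [|N _ *]; first by rewrite leqNgt k_gt0.
by rewrite word_decS; apply: plac_eq_swap12.
Qed.

End LetterThroughDecreasingWord.

Section LettersOfB.
Context {disp : Order.disp_t} {P : finPOrderType disp}.
Variables (n : nat) (a b : nat -> P).
Hypothesis a_lt : forall i, (1 <= i <= n)%N -> a i < a i.+1.
Hypothesis sim_ab : forall i, (1 <= i <= n)%N -> simP (a i) (b i).
Hypothesis sim_aSb : forall i, (1 <= i <= n)%N -> simP (a i.+1) (b i).
Hypothesis lt_abS : forall i, (1 <= i <= n.-1)%N -> a i < b i.+1.
Hypothesis lt_baSS : forall i, (1 <= i <= n.-1)%N -> b i < a i.+2.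

Lemma a_homo_le i j : (1 <= i <= j)%N -> (j <= n.+1)%N -> a i <= a j.
Proof.
move=> /andP [i_ge1 le_ij] le_jn.
apply: (Order.NatMonotonyTheory.nondecn_inP (D := [pred m | 1 <= m <= n.+1]%N)).
- move=> x y /andP [x_ge1 _] /andP [_ y_le] z; rewrite !ltEnat /= => z_range.
  apply/andP; lia.
- by move=> m /andP [m_ge1 _] /andP [_ m_le]; apply/ltW/a_lt/andP.
- by rewrite inE /= i_ge1 (leq_trans le_ij).
- by rewrite inE /= le_jn (leq_trans i_ge1).
- by [].
Qed.

Lemma plac_eq_commute_b_letter k : (1 <= k <= n)%N ->
  plac_eq (word_dec a n.+1 ++ [:: b k]) (b k :: word_dec a n.+1).
Proof.
case: k => // k /andP [_ le_kn].
have /andP [ak_nlt bk_nlt] := sim_ab k.+1 (ltac:(lia)).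
have /andP [akS_nlt bk_nltS] := sim_aSb k.+1 (ltac:(lia)).
have low : plac_eq (word_dec a k.+1 ++ [:: b k.+1]) [:: a k.+1, b k.+1 & word_dec a k].
  apply: plac_eq_letter_low => j j_range; split.
  - by apply: a_lt; lia.
  - apply: contra bk_nlt => /lt_le_trans; apply; apply: a_homo_le; lia.
  - by apply: le_lt_trans (lt_abS k (ltac:(lia))); apply: a_homo_le; lia.
have pivot : plac_eq (word_dec a k.+2 ++ [:: b k.+1]) (b k.+1 :: word_dec a k.+2).
  rewrite word_decS; apply: plac_eq_trans (plac_eq_catl [:: a k.+2] low) _.
  rewrite !word_decS; apply: plac_eq_rotate.
  - by apply: sim_ab; lia.
  - by rewrite simPC; apply: sim_aSb; lia.
  - by apply: a_lt; lia.
apply: (@plac_eq_letter_high _ _ a (b k.+1) k.+2 n.+1 _ pivot); first lia.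
move=> m m_range; split.
- apply: contra akS_nlt => /(le_lt_trans _); apply; apply: a_homo_le; lia.
- by apply: a_lt; lia.
- by apply: lt_le_trans (lt_baSS k.+1 (ltac:(lia))) _; apply: a_homo_le; lia.
Qed.

End LettersOfB.

Theorem mainTheorem15 (disp : Order.disp_t) (P : finPOrderType disp)
  (n : nat) (a b : nat -> P) :
  three_one_free (P := P) ->
  (* a = a_(n+1) ... a_1 and b = b_n ... b_1 are P-strictly decreasing *)
  (forall i, (1 <= i <= n)%N -> a i < a i.+1) ->
  (forall i, (1 <= i < n)%N -> b i < b i.+1) ->
  (forall i, (1 <= i <= n)%N -> simP (a i) (b i)) ->
  (forall i, (1 <= i <= n)%N -> simP (a i.+1) (b i)) ->
  (forall i, (1 <= i <= n.-1)%N -> a i < b i.+1) ->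
  (forall i, (1 <= i <= n.-1)%N -> b i < a i.+2) ->
  plac_equiv (mono (word_dec a n.+1 ++ word_dec b n))
             (mono (word_dec b n ++ word_dec a n.+1)).
Proof.
move=> _ a_lt _ sim_ab sim_aSb lt_abS lt_baSS.
apply: plac_eq_commute => c /mapP [k]; rewrite mem_rev mem_iota add1n ltnS => k_range ->.
exact: plac_eq_commute_b_letter.
Qed.
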